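(* For all integers $t\ge0$ and $k\ge0$, \[\kappa_2(2^{k+1}t+2^k-1)=\frac{(2^k+1)\kappa_2(t)}{2^{k+1}}+\frac{(2^k-1)\kappa_2(t+1)}{2^{k+1}}+\frac{3(2^k-1)}{2^k},\] and \[D(2^{k+1}t+2^k-1)=\frac{2^k+1}{2^{k+1}}D(t)+\frac{2^k-1}{2^{k+1}}D(t+1)+\Bigl(\frac12+\frac{k-1}{2^{k+1}}\Bigr)\bigl(\kappa_2(t+1)-\kappa_2(t)\bigr)+1+\frac{3k-1}{2^k}.\]
   Context: $s(n)$ is the number of $1$s in the binary expansion of $n\ge0$; $\delta(j,t)=\lim_{N\to\infty}\frac1N|\{0\le n<N: s(n+t)-s(n)=j\}|$ for $j\in\mathbb Z$, a probability distribution on $\mathbb Z$, and $\kappa_j(t)$ denotes its $j$-th cumulant ($\log\sum_k\delta(k,t)e^{2\pi ik\vartheta}=\sum_{j\ge0}\frac{\kappa_j(t)}{j!}(2\pi i\vartheta)^j$ near $\vartheta=0$). Set $D(t)=\kappa_2(t)-\kappa_3(t)/3$. *)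

From Stdlib Require Import Reals Lia ZArith List.
From Coquelicot Require Import Coquelicot.
Open Scope R_scope.

(* Binary digit sum s(n): number of 1s in the binary expansion of n.
   The fuel argument (= n) is always sufficient. *)
Fixpoint bits_fuel (fuel n : nat) : nat :=
  match fuel with
  | O => O
  | S f => match n with
           | O => O
           | _ => Nat.modulo n 2 + bits_fuel f (Nat.div n 2)
           end
  end.
Definition s (n : nat) : nat := bits_fuel n n.

Definition count_eq (j : Z) (t N : nat) : nat :=
  length (filter (fun n => Z.eqb (Z.of_nat (s (n + t)) - Z.of_nat (s n)) j)
                 (seq 0 N)).

Definition delta (j : Z) (t : nat) : R :=
  real (Lim_seq (fun N => INR (count_eq j t N) / INR N)).

Definition moment (t p : nat) : R :=
  Series (fun n => delta (Z.of_nat n) t * INR n ^ p)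
  + Series (fun n => delta (- Z.of_nat (S n))%Z t * (- INR (S n)) ^ p).

Fixpoint rsum (n : nat) (f : nat -> R) : R :=
  match n with
  | O => 0
  | S n' => rsum n' f + f n'
  end.

(* Cumulants of a moment sequence m (m p = sum_k delta(k) k^p), i.e. the
   coefficients kappa_j of  log (sum_p m_p x^p / p!) = sum_j kappa_j x^j / j!
   (x = 2 pi i theta).  Extracting coefficients of phi' = phi * (log phi)'
   gives  m_{n+1} = sum_{k=0}^{n} C(n,k) kappa_{k+1} m_{n-k},  and
   kappa_0 = ln m_0.  cumul_upto m n returns a function agreeing with
   kappa_k for all k <= n. *)
Fixpoint cumul_upto (m : nat -> R) (n : nat) : nat -> R :=
  match n with
  | O => fun _ => ln (m O)
  | S n' =>
      let f := cumul_upto m n' in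
      fun k => if Nat.leb k n' then f k
               else (m (S n') - rsum n' (fun i => Binomial.C n' i * f (S i) * m (n' - i)%nat))
                    / m O
  end.

Definition cumulant (m : nat -> R) (j : nat) : R := cumul_upto m j j.

Definition kappa (j t : nat) : R := cumulant (moment t) j.

Definition Dfun (t : nat) : R := kappa 2 t - kappa 3 t / 3.

From Stdlib Require Import Reals Lia ZArith List Lra.
From Coquelicot Require Import Coquelicot.
Open Scope R_scope.

(* Since s(2m) = s(m) and s(2m+1) = s(m) + 1, splitting 0 <= n < 2N by parity gives
   count(j, 2t, 2N) = 2 count(j, t, N) and
   count(j, 2t+1, 2N) = count(j-1, t, N) + count(j+1, t+1, N).
   Counts grow by at most one per step, so along the binary expansion of t these identities
   show that the densities exist and satisfy delta(j, 2t) = delta(j, t) and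
   delta(j, 2t+1) = (delta(j-1, t) + delta(j+1, t+1)) / 2, starting from delta(., 0) = [j = 0]
   and the geometric law delta(., 1); in particular every moment m_p(t) converges.
   Consequently m_p(2t) = m_p(t) while m_p(2t+1) averages the moments of delta(., t) shifted
   by +1 and of delta(., t+1) shifted by -1.  This gives mass 1 and mean 0, hence
   kappa_2 = m_2 and kappa_3 = m_3, together with
   m_2(2t+1) = (m_2(t) + m_2(t+1)) / 2 + 1 and
   m_3(2t+1) = (m_3(t) + m_3(t+1)) / 2 + 3/2 (m_2(t) - m_2(t+1)).
   For u_k = 2^(k+1) t + 2^k - 1 we have u_(k+1) = 2 u_k + 1 and u_k + 1 = 2^k (2t+1), and
   both formulas follow by induction on k. *)

Lemma binary_ind (P : nat -> Prop) :
  P 0%nat -> P 1%nat ->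
  (forall t, P t -> P (2 * t)%nat) ->
  (forall t, P t -> P (t + 1)%nat -> P (2 * t + 1)%nat) ->
  forall t, P t.
Proof.
  intros P0 P1 Peven Podd t. induction t as [t IH] using Wf_nat.lt_wf_ind.
  destruct (Nat.Even_or_Odd t) as [[q ->] | [q ->]].
  - destruct q as [|q]; [exact P0|]. apply Peven, IH. lia.
  - destruct q as [|q]; [exact P1|]. apply Podd; apply IH; lia.
Qed.

Lemma bits_fuel_enough f g n :
  (n <= f)%nat -> (n <= g)%nat -> bits_fuel f n = bits_fuel g n.
Proof.
  revert g n. induction f as [|f IH]; intros [|g] [|n] Hf Hg; try (reflexivity || lia).
  cbn [bits_fuel]. f_equal.
  assert (Nat.div (S n) 2 < S n)%nat by (apply Nat.div_lt; lia).
  apply IH; lia.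
Qed.

Lemma s_succ n : s (S n) = (S n mod 2 + s (S n / 2))%nat.
Proof.
  unfold s at 1. cbn [bits_fuel]. f_equal.
  assert (Nat.div (S n) 2 < S n)%nat by (apply Nat.div_lt; lia).
  apply bits_fuel_enough; lia.
Qed.

Lemma s_double m : s (2 * m) = s m.
Proof.
  destruct m as [|m]; [reflexivity|].
  replace (2 * S m)%nat with (S (S m * 2 - 1)) by lia. rewrite s_succ.
  replace (S (S m * 2 - 1)) with (S m * 2)%nat by lia.
  rewrite Nat.Div0.mod_mul, Nat.div_mul; lia.
Qed.

Lemma s_double_succ m : s (2 * m + 1) = S (s m).
Proof.
  replace (2 * m + 1)%nat with (S (1 + m * 2 - 1)) by lia. rewrite s_succ.
  replace (S (1 + m * 2 - 1)) with (1 + m * 2)%nat by lia.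
  rewrite Nat.Div0.mod_add, Nat.div_add by lia. reflexivity.
Qed.

Lemma s_succ_le n : (s (S n) <= S (s n))%nat.
Proof.
  induction n as [| | q _ | q IHq _] using binary_ind.
  - reflexivity.
  - cbv. lia.
  - replace (S (2 * q)) with (2 * q + 1)%nat by lia.
    rewrite s_double_succ, s_double. lia.
  - replace (S (2 * q + 1)) with (2 * S q)%nat by lia.
    rewrite s_double, s_double_succ. lia.
Qed.

Definition sdiff (t n : nat) : Z := (Z.of_nat (s (n + t)) - Z.of_nat (s n))%Z.

Definition hit (j : Z) (t n : nat) : nat := if Z.eqb (sdiff t n) j then 1 else 0.

Lemma count_eq_S j t N : count_eq j t (S N) = (count_eq j t N + hit j t N)%nat.
Proof.
  unfold count_eq, hit, sdiff. rewrite seq_S, filter_app, length_app. cbn.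
  destruct (Z.eqb _ j); reflexivity.
Qed.

Lemma count_eq_step j t N :
  (count_eq j t N <= count_eq j t (S N) <= S (count_eq j t N))%nat.
Proof. rewrite count_eq_S. unfold hit. destruct (Z.eqb _ j); lia. Qed.

Lemma hit_shift j a t n t' n' :
  sdiff t' n' = (sdiff t n + a)%Z -> hit j t' n' = hit (j - a) t n.
Proof.
  intros E. unfold hit. rewrite E.
  destruct (Z.eqb_spec (sdiff t n + a) j), (Z.eqb_spec (sdiff t n) (j - a)); lia.
Qed.

Lemma sdiff_even_even t m : sdiff (2 * t) (2 * m) = sdiff t m.
Proof.
  unfold sdiff. replace (2 * m + 2 * t)%nat with (2 * (m + t))%nat by lia.
  rewrite !s_double. lia.
Qed.

Lemma sdiff_even_odd t m : sdiff (2 * t) (2 * m + 1) = sdiff t m.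
Proof.
  unfold sdiff. replace (2 * m + 1 + 2 * t)%nat with (2 * (m + t) + 1)%nat by lia.
  rewrite !s_double_succ. lia.
Qed.

Lemma sdiff_odd_even t m : sdiff (2 * t + 1) (2 * m) = (sdiff t m + 1)%Z.
Proof.
  unfold sdiff. replace (2 * m + (2 * t + 1))%nat with (2 * (m + t) + 1)%nat by lia.
  rewrite s_double_succ, s_double. lia.
Qed.

Lemma sdiff_odd_odd t m : sdiff (2 * t + 1) (2 * m + 1) = (sdiff (t + 1) m - 1)%Z.
Proof.
  unfold sdiff. replace (2 * m + 1 + (2 * t + 1))%nat with (2 * (m + (t + 1)))%nat by lia.
  rewrite s_double_succ, s_double. lia.
Qed.

Lemma count_eq_double j t N :
  count_eq j (2 * t) (2 * N) = (2 * count_eq j t N)%nat.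
Proof.
  induction N as [|N IH]; [reflexivity|].
  replace (2 * S N)%nat with (S (S (2 * N))) by lia.
  rewrite !count_eq_S, IH, <- (Nat.add_1_r (2 * N)).
  unfold hit. rewrite sdiff_even_even, sdiff_even_odd.
  destruct (Z.eqb _ j); lia.
Qed.

Lemma count_eq_double_succ j t N :
  count_eq j (2 * t + 1) (2 * N)
  = (count_eq (j - 1) t N + count_eq (j + 1) (t + 1) N)%nat.
Proof.
  induction N as [|N IH]; [reflexivity|].
  replace (2 * S N)%nat with (S (S (2 * N))) by lia.
  rewrite !count_eq_S, IH, <- (Nat.add_1_r (2 * N)).
  rewrite (hit_shift _ _ _ _ _ _ (sdiff_odd_even t N)).
  rewrite (hit_shift _ _ _ _ _ _ (sdiff_odd_odd t N)), Z.sub_opp_r. lia.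
Qed.

Lemma count_eq_0 j N : count_eq j 0 N = if Z.eqb j 0 then N else 0%nat.
Proof.
  induction N as [|N IH]; [destruct (Z.eqb j 0); reflexivity|].
  rewrite count_eq_S, IH. unfold hit, sdiff. rewrite Nat.add_0_r, Z.sub_diag.
  destruct (Z.eqb_spec 0 j), (Z.eqb_spec j 0); lia.
Qed.

Lemma count_eq_1_gt j N : (1 < j)%Z -> count_eq j 1 N = 0%nat.
Proof.
  intros Hj. induction N as [|N IH]; [reflexivity|].
  rewrite count_eq_S, IH. unfold hit, sdiff. rewrite Nat.add_1_r.
  pose proof (s_succ_le N). destruct (Z.eqb_spec (Z.of_nat (s (S N)) - Z.of_nat (s N)) j); lia.
Qed.

Lemma is_lim_seq_inv_INR : is_lim_seq (fun n => / INR n) 0.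
Proof.
  replace (Finite 0) with (Rbar_inv p_infty) by reflexivity.
  apply is_lim_seq_inv; [apply is_lim_seq_INR | discriminate].
Qed.

Lemma ratio_succ_close (A B Q : R) :
  0 < Q -> 0 <= A <= Q -> A <= B <= A + 1 ->
  A / Q - / (Q + 1) <= B / (Q + 1) <= A / Q + / (Q + 1).
Proof.
  intros HQ HA HB.
  assert (Hq : 0 <= A / Q <= 1).
  { assert (A / Q * Q = A) by (field; lra). nra. }
  replace (B / (Q + 1)) with (A / Q + (B - A - A / Q) * / (Q + 1)) by (field; lra).
  assert (0 < / (Q + 1)) by (apply Rinv_0_lt_compat; lra).
  assert (-1 <= B - A - A / Q <= 1) by lra.
  set (X := B - A - A / Q) in *. split; nra.
Qed.

(* Only even indices matter: a(2q+1)/(2q+1) is within 1/(2q+1) of a(2q)/(2q). *)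
Lemma is_lim_seq_ratio_even (a : nat -> nat) (L : R) :
  a 0%nat = 0%nat -> (forall N, (a N <= a (S N) <= S (a N))%nat) ->
  is_lim_seq (fun N => INR (a (2 * N)%nat) / INR (2 * N)) L ->
  is_lim_seq (fun N => INR (a N) / INR N) L.
Proof.
  intros a0 step Heven.
  assert (a_le : forall N, (a N <= N)%nat).
  { induction N; [lia|]. specialize (step N). lia. }
  set (w := fun n => INR (a (2 * (n / 2))%nat) / INR (2 * (n / 2))).
  assert (Hw : is_lim_seq w L).
  { apply (is_lim_seq_subseq (fun N => INR (a (2 * N)%nat) / INR (2 * N))); [|exact Heven].
    intros P [N HN]. exists (2 * N)%nat. intros n Hn. apply HN.
    apply Nat.div_le_lower_bound; lia. }
  apply is_lim_seq_le_le_loc with (u := fun n => w n - / INR n) (w := fun n => w n + / INR n).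
  - exists 2%nat. intros n Hn. unfold w.
    destruct (Nat.Even_or_Odd n) as [[q ->] | [q ->]].
    + rewrite (Nat.mul_comm 2 q), Nat.div_mul, (Nat.mul_comm q 2) by lia.
      assert (0 < / INR (2 * q)) by (apply Rinv_0_lt_compat, lt_0_INR; lia).
      lra.
    + replace ((2 * q + 1) / 2)%nat with q
        by (apply Nat.div_unique with 1%nat; lia).
      pose proof (step (2 * q)%nat) as Hs. replace (S (2 * q)) with (2 * q + 1)%nat in Hs by lia.
      rewrite plus_INR. change (INR 1) with 1.
      apply ratio_succ_close.
      * apply lt_0_INR. lia.
      * split; [apply pos_INR | apply le_INR, a_le].
      * rewrite <- S_INR. split; apply le_INR; lia.
  - replace L with (L - 0) by ring. apply is_lim_seq_minus'; [exact Hw | apply is_lim_seq_inv_INR].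
  - replace L with (L + 0) by ring. apply is_lim_seq_plus'; [exact Hw | apply is_lim_seq_inv_INR].
Qed.

Definition has_density (j : Z) (t : nat) (L : R) : Prop :=
  is_lim_seq (fun N => INR (count_eq j t N) / INR N) L.

Lemma has_density_double j t L : has_density j t L -> has_density j (2 * t) L.
Proof.
  intros H. apply is_lim_seq_ratio_even; [reflexivity | apply count_eq_step |].
  apply (is_lim_seq_ext_loc (fun N => INR (count_eq j t N) / INR N)); [|exact H].
  exists 1%nat. intros N HN. rewrite count_eq_double, !mult_INR.
  assert (0 < INR N) by (apply lt_0_INR; lia).
  change (INR 2) with 2. field. lra.
Qed.

Lemma has_density_double_succ j t L1 L2 :
  has_density (j - 1) t L1 -> has_density (j + 1) (t + 1) L2 ->
  has_density j (2 * t + 1) ((L1 + L2) / 2).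
Proof.
  intros H1 H2. apply is_lim_seq_ratio_even; [reflexivity | apply count_eq_step |].
  apply (is_lim_seq_ext_loc
           (fun N => (INR (count_eq (j - 1) t N) / INR N
                      + INR (count_eq (j + 1) (t + 1) N) / INR N) / 2)).
  - exists 1%nat. intros N HN. rewrite count_eq_double_succ, plus_INR, mult_INR.
    assert (0 < INR N) by (apply lt_0_INR; lia).
    change (INR 2) with 2. field. lra.
  - apply is_lim_seq_div'; [apply is_lim_seq_plus' | apply is_lim_seq_const |];
      [exact H1 | exact H2 | lra].
Qed.

Lemma has_density_0 j : has_density j 0 (if Z.eqb j 0 then 1 else 0).
Proof.
  apply (is_lim_seq_ext_loc (fun _ => if Z.eqb j 0 then 1 else 0)); [|apply is_lim_seq_const].
  exists 1%nat. intros N HN. rewrite count_eq_0.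
  assert (0 < INR N) by (apply lt_0_INR; lia).
  destruct (Z.eqb j 0); cbn [INR]; field; lra.
Qed.

Definition delta1_formula (j : Z) : R := if Z.leb j 1 then / 2 ^ Z.to_nat (2 - j) else 0.

(* t = 1 is a fixed point of the odd recursion (2 * 0 + 1 = 1), so delta(., 1) is
   computed by descending induction on j, starting from j > 1 where it vanishes. *)
Lemma has_density_1 j : has_density j 1 (delta1_formula j).
Proof.
  assert (above : forall j, (1 < j)%Z -> has_density j 1 0).
  { intros i Hi. apply (is_lim_seq_ext (fun _ => 0)); [|apply is_lim_seq_const].
    intros N. rewrite count_eq_1_gt by exact Hi. cbn [INR]. lra. }
  destruct (Z.le_gt_cases j 1) as [Hj | Hj].
  2:{ unfold delta1_formula. rewrite (proj2 (Z.leb_gt j 1) Hj). exact (above j Hj). }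
  replace j with (1 - Z.of_nat (Z.to_nat (1 - j)))%Z by lia.
  induction (Z.to_nat (1 - j)) as [|n IH].
  - replace (delta1_formula (1 - Z.of_nat 0)) with ((1 + 0) / 2)
      by (unfold delta1_formula; simpl; field).
    apply (has_density_double_succ _ 0); [apply (has_density_0 0) | apply above; lia].
  - replace (delta1_formula (1 - Z.of_nat (S n)))
      with ((0 + delta1_formula (1 - Z.of_nat n)) / 2).
    + apply (has_density_double_succ _ 0).
      * replace 0 with (if Z.eqb (1 - Z.of_nat (S n) - 1) 0 then 1 else 0) at 1
          by (rewrite (proj2 (Z.eqb_neq _ 0)) by lia; reflexivity).
        apply has_density_0.
      * replace (1 - Z.of_nat (S n) + 1)%Z with (1 - Z.of_nat n)%Z by lia. exact IH.
    + unfold delta1_formula. rewrite !(proj2 (Z.leb_le _ 1)) by lia.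
      replace (Z.to_nat (2 - (1 - Z.of_nat (S n)))) with (S (Z.to_nat (2 - (1 - Z.of_nat n))))
        by lia.
      assert (0 < 2 ^ Z.to_nat (2 - (1 - Z.of_nat n))) by (apply pow_lt; lra).
      cbn [pow]. field. lra.
Qed.

Lemma has_density_delta j t L : has_density j t L -> delta j t = L.
Proof. intros H. unfold delta. rewrite (is_lim_seq_unique _ _ H). reflexivity. Qed.

Lemma delta_has_density j t : has_density j t (delta j t).
Proof.
  revert j. induction t as [| | t IH | t IH IH1] using binary_ind; intros j.
  - rewrite (has_density_delta _ _ _ (has_density_0 j)). apply has_density_0.
  - rewrite (has_density_delta _ _ _ (has_density_1 j)). apply has_density_1.
  - rewrite (has_density_delta _ _ _ (has_density_double _ _ _ (IH j))).
    apply has_density_double, IH.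
  - pose proof (has_density_double_succ _ _ _ _ (IH (j - 1)%Z) (IH1 (j + 1)%Z)) as H.
    rewrite (has_density_delta _ _ _ H). exact H.
Qed.

Lemma delta_double j t : delta j (2 * t) = delta j t.
Proof. apply has_density_delta, has_density_double, delta_has_density. Qed.

Lemma delta_double_succ j t :
  delta j (2 * t + 1) = (delta (j - 1) t + delta (j + 1) (t + 1)) / 2.
Proof. apply has_density_delta, has_density_double_succ; apply delta_has_density. Qed.

Lemma delta_0 j : delta j 0 = if Z.eqb j 0 then 1 else 0.
Proof. apply has_density_delta, has_density_0. Qed.

Lemma delta_1 j : delta j 1 = delta1_formula j.
Proof. apply has_density_delta, has_density_1. Qed.

Lemma is_series_single (a : nat -> R) : (forall n, a (S n) = 0) -> is_series a (a 0%nat).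
Proof.
  intros Ha. apply is_series_decr_1.
  change (is_series (fun k => a (S k)) (a 0%nat - a 0%nat)).
  replace (a 0%nat - a 0%nat) with 0 by ring.
  apply (is_series_ext (fun _ => 0)); [intros n; symmetry; apply Ha |].
  apply (filterlim_ext (fun _ => 0)); [|apply filterlim_const].
  intros n. rewrite sum_n_const. cbn. ring.
Qed.

Lemma is_lim_seq_pow (u : nat -> R) (l : R) q :
  is_lim_seq u l -> is_lim_seq (fun n => u n ^ q) (l ^ q).
Proof.
  intros H. induction q as [|q IH]; [apply is_lim_seq_const|].
  apply (is_lim_seq_mult' _ _ _ _ H IH).
Qed.

Lemma ex_series_pow_geom q x : 0 < x < 1 -> ex_series (fun n => INR (S n) ^ q * x ^ n).
Proof.
  intros Hx. apply ex_series_Rabs, (ex_series_DAlembert _ x); [lra | |].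
  - intros n. apply Rgt_not_eq, Rmult_lt_0_compat; apply pow_lt; [apply lt_0_INR; lia | lra].
  - apply (is_lim_seq_ext (fun n => (1 + / INR (S n)) ^ q * x)).
    + intros n. assert (0 < INR (S n)) by (apply lt_0_INR; lia).
      assert (0 < INR (S n) ^ q) by (apply pow_lt; lra).
      assert (0 < x ^ n) by (apply pow_lt; lra).
      rewrite Rabs_pos_eq.
      * rewrite (S_INR (S n)). cbn [pow].
        replace (INR (S n) + 1) with (INR (S n) * (1 + / INR (S n))) by (field; lra).
        rewrite Rpow_mult_distr. field. lra.
      * apply Rlt_le, Rdiv_lt_0_compat; apply Rmult_lt_0_compat; apply pow_lt;
          solve [apply lt_0_INR; lia | lra].
    + assert (H : is_lim_seq (fun n => (1 + / INR (S n)) ^ q * x) ((1 + 0) ^ q * x)).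
      { apply is_lim_seq_mult'; [apply is_lim_seq_pow | apply is_lim_seq_const].
        apply is_lim_seq_plus'; [apply is_lim_seq_const|].
        apply (is_lim_seq_incr_1 (fun n => / INR n)), is_lim_seq_inv_INR. }
      rewrite Rplus_0_r, pow1, Rmult_1_l in H. exact H.
Qed.

Definition zpos (f : Z -> R) (n : nat) : R := f (Z.of_nat n).
Definition zneg (f : Z -> R) (n : nat) : R := f (- Z.of_nat (S n))%Z.
Definition zsummable (f : Z -> R) : Prop := ex_series (zpos f) /\ ex_series (zneg f).
Definition zsum (f : Z -> R) : R := Series (zpos f) + Series (zneg f).

Lemma zsummable_ext f g : (forall j, f j = g j) -> zsummable f -> zsummable g.
Proof.
  intros E [Hp Hn]. split.
  - apply (ex_series_ext (zpos f)); [intros n; apply E | exact Hp].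
  - apply (ex_series_ext (zneg f)); [intros n; apply E | exact Hn].
Qed.

Lemma zsum_ext f g : (forall j, f j = g j) -> zsum f = zsum g.
Proof. intros E. unfold zsum. f_equal; apply Series_ext; intros n; apply E. Qed.

Lemma zsummable_plus f g : zsummable f -> zsummable g -> zsummable (fun j => f j + g j).
Proof. intros [Fp Fn] [Gp Gn]. split; apply (ex_series_plus (V := R_NormedModule)); assumption. Qed.

Lemma zsum_plus f g : zsummable f -> zsummable g -> zsum (fun j => f j + g j) = zsum f + zsum g.
Proof.
  intros [Fp Fn] [Gp Gn]. unfold zsum.
  change (zpos (fun j => f j + g j)) with (fun n => zpos f n + zpos g n).
  change (zneg (fun j => f j + g j)) with (fun n => zneg f n + zneg g n).
  rewrite (Series_plus (zpos f) (zpos g)), (Series_plus (zneg f) (zneg g)) by assumption.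
  ring.
Qed.

Lemma zsummable_scal c f : zsummable f -> zsummable (fun j => c * f j).
Proof. intros [Fp Fn]. split; apply (ex_series_scal_l (V := R_NormedModule)); assumption. Qed.

Lemma zsum_scal c f : zsum (fun j => c * f j) = c * zsum f.
Proof.
  unfold zsum.
  change (zpos (fun j => c * f j)) with (fun n => c * zpos f n).
  change (zneg (fun j => c * f j)) with (fun n => c * zneg f n).
  rewrite (Series_scal_l c (zpos f)), (Series_scal_l c (zneg f)). ring.
Qed.

Lemma zsummable_succ f : zsummable f <-> zsummable (fun j => f (j + 1)%Z).
Proof.
  assert (Epos : forall n, zpos (fun j => f (j + 1)%Z) n = zpos f (S n))
    by (intros n; unfold zpos; f_equal; lia).
  assert (Eneg : forall n, zneg (fun j => f (j + 1)%Z) (S n) = zneg f n)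
    by (intros n; unfold zneg; f_equal; lia).
  split; intros [Hp Hn]; split.
  - apply (ex_series_ext (fun n => zpos f (S n))); [intros n; symmetry; apply Epos|].
    apply (proj1 (ex_series_incr_1 _)), Hp.
  - apply (proj2 (ex_series_incr_1 _)), (ex_series_ext (zneg f));
      [intros n; symmetry; apply Eneg | exact Hn].
  - apply (proj2 (ex_series_incr_1 _)), (ex_series_ext (zpos (fun j => f (j + 1)%Z)));
      [apply Epos | exact Hp].
  - apply (ex_series_ext (fun n => zneg (fun j => f (j + 1)%Z) (S n))); [apply Eneg|].
    apply (proj1 (ex_series_incr_1 _)), Hn.
Qed.

Lemma zsum_succ f : zsummable f -> zsum (fun j => f (j + 1)%Z) = zsum f.
Proof.
  intros Hf. pose proof Hf as [Hp _]. apply zsummable_succ in Hf as [_ Hn].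
  unfold zsum. rewrite (Series_incr_1 (zpos f) Hp), (Series_incr_1 _ Hn).
  replace (zneg (fun j => f (j + 1)%Z) 0%nat) with (zpos f 0%nat) by reflexivity.
  rewrite (Series_ext (fun k => zpos f (S k)) (zpos (fun j => f (j + 1)%Z)))
    by (intros n; unfold zpos; f_equal; lia).
  rewrite (Series_ext (fun k => zneg (fun j => f (j + 1)%Z) (S k)) (zneg f))
    by (intros n; unfold zneg; f_equal; lia).
  ring.
Qed.

Lemma zsum_single f : (forall j, j <> 0%Z -> f j = 0) -> zsummable f /\ zsum f = f 0%Z.
Proof.
  intros Hf.
  assert (Hp : is_series (zpos f) (f 0%Z))
    by (apply is_series_single; intros n; apply Hf; lia).
  assert (Hn : is_series (zneg f) (zneg f 0%nat))
    by (apply is_series_single; intros n; apply Hf; lia).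
  replace (zneg f 0%nat) with 0 in Hn by (symmetry; apply Hf; lia).
  split; [split; eexists; eassumption|].
  unfold zsum. rewrite (is_series_unique _ _ Hp), (is_series_unique _ _ Hn). ring.
Qed.

Definition moments_summable (t : nat) : Prop :=
  forall p, zsummable (fun j => delta j t * IZR j ^ p).

Lemma zsummable_shifted_weight t a q r : moments_summable t ->
  zsummable (fun j => delta j t * (IZR j + a) ^ q * IZR j ^ r).
Proof.
  intros Ht. revert r. induction q as [|q IH]; intros r.
  - apply (zsummable_ext (fun j => delta j t * IZR j ^ r)); [intros j; ring | apply Ht].
  - apply (zsummable_ext (fun j => delta j t * (IZR j + a) ^ q * IZR j ^ S r
                                   + a * (delta j t * (IZR j + a) ^ q * IZR j ^ r))).
    + intros j. cbn [pow]. ring.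
    + apply zsummable_plus; [apply IH | apply zsummable_scal, IH].
Qed.

Lemma zsummable_delta_pred t p : moments_summable t ->
  zsummable (fun j => delta (j - 1) t * IZR j ^ p).
Proof.
  intros Ht. apply zsummable_succ.
  apply (zsummable_ext (fun j => delta j t * (IZR j + 1) ^ p * IZR j ^ 0)).
  - intros j. rewrite Z.add_simpl_r, plus_IZR. cbn [pow IZR IPR]. ring.
  - apply zsummable_shifted_weight, Ht.
Qed.

Lemma zsummable_delta_succ t p : moments_summable t ->
  zsummable (fun j => delta (j + 1) t * IZR j ^ p).
Proof.
  intros Ht.
  pose proof (proj1 (zsummable_succ _) (zsummable_shifted_weight t (-1) p 0 Ht)) as H.
  refine (zsummable_ext _ _ _ H). intros j. cbv beta.
  rewrite plus_IZR. replace (IZR j + IZR 1 + -1) with (IZR j) by (cbn; ring). cbn [pow]. ring.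
Qed.

Lemma moments_summable_0 : moments_summable 0.
Proof.
  intros p. apply zsum_single. intros j Hj.
  rewrite delta_0, (proj2 (Z.eqb_neq j 0) Hj). ring.
Qed.

Lemma moments_summable_1 : moments_summable 1.
Proof.
  intros p. split.
  - apply (proj2 (ex_series_incr_1 _)). eexists. apply is_series_single.
    intros n. unfold zpos. rewrite delta_1. unfold delta1_formula.
    rewrite (proj2 (Z.leb_gt _ 1)) by lia.
    apply Rmult_0_l.
  - enough (E : forall n, (-1) ^ p / 8 * (INR (S n) ^ p * (/ 2) ^ n)
                          = zneg (fun j => delta j 1 * IZR j ^ p) n).
    { apply (ex_series_ext _ _ E).
      apply (ex_series_scal_l (V := R_NormedModule)), ex_series_pow_geom. lra. }
    intros n. unfold zneg. rewrite delta_1. unfold delta1_formula.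
    rewrite (proj2 (Z.leb_le _ 1)) by lia.
    replace (Z.to_nat (2 - - Z.of_nat (S n))) with (n + 3)%nat by lia.
    rewrite opp_IZR, <- INR_IZR_INZ.
    replace (- INR (S n)) with (-1 * INR (S n)) by ring.
    rewrite Rpow_mult_distr, pow_add, pow_inv.
    assert (0 < 2 ^ n) by (apply pow_lt; lra).
    cbn [pow]. field. lra.
Qed.

Lemma moments_summable_double t : moments_summable t -> moments_summable (2 * t).
Proof.
  intros Ht p. apply (zsummable_ext (fun j => delta j t * IZR j ^ p)); [|apply Ht].
  intros j. rewrite delta_double. reflexivity.
Qed.

Lemma moments_summable_double_succ t :
  moments_summable t -> moments_summable (t + 1) -> moments_summable (2 * t + 1).
Proof.
  intros Ht Ht1 p.
  apply (zsummable_ext (fun j => / 2 * (delta (j - 1) t * IZR j ^ p)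
                                 + / 2 * (delta (j + 1) (t + 1) * IZR j ^ p))).
  - intros j. rewrite delta_double_succ. field.
  - apply zsummable_plus; apply zsummable_scal;
      [apply zsummable_delta_pred, Ht | apply zsummable_delta_succ, Ht1].
Qed.

Lemma moments_summable_all t : moments_summable t.
Proof.
  induction t using binary_ind.
  - exact moments_summable_0.
  - exact moments_summable_1.
  - apply moments_summable_double; assumption.
  - apply moments_summable_double_succ; assumption.
Qed.

Lemma moment_zsum t p : moment t p = zsum (fun j => delta j t * IZR j ^ p).
Proof.
  unfold moment, zsum, zpos, zneg. f_equal; apply Series_ext; intros n.
  - rewrite <- INR_IZR_INZ. reflexivity.
  - rewrite opp_IZR, <- INR_IZR_INZ. reflexivity.
Qed.

Lemma moment_double t p : moment (2 * t) p = moment t p.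
Proof.
  rewrite !moment_zsum. apply zsum_ext. intros j. rewrite delta_double. reflexivity.
Qed.

Lemma moment_double_succ t p :
  moment (2 * t + 1) p
  = / 2 * zsum (fun j => delta j t * (IZR j + 1) ^ p)
    + / 2 * zsum (fun j => delta j (t + 1) * (IZR j + -1) ^ p).
Proof.
  rewrite moment_zsum.
  rewrite (zsum_ext _ (fun j => / 2 * (delta (j - 1) t * IZR j ^ p)
                                + / 2 * (delta (j + 1) (t + 1) * IZR j ^ p)))
    by (intros j; rewrite delta_double_succ; field).
  rewrite zsum_plus, !(zsum_scal (/ 2)).
  2: apply zsummable_scal, zsummable_delta_pred, moments_summable_all.
  2: apply zsummable_scal, zsummable_delta_succ, moments_summable_all.
  rewrite <- (zsum_succ (fun j => delta (j - 1) t * IZR j ^ p))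
    by (apply zsummable_delta_pred, moments_summable_all).
  rewrite <- (zsum_succ (fun j => delta j (t + 1) * (IZR j + -1) ^ p)).
  - f_equal; f_equal; apply zsum_ext; intros j; rewrite ?Z.add_simpl_r, plus_IZR; cbn [IZR IPR].
    + reflexivity.
    + f_equal. f_equal. ring.
  - apply (zsummable_ext (fun j => delta j (t + 1) * (IZR j + -1) ^ p * IZR j ^ 0));
      [intros j; cbn [pow]; ring | apply zsummable_shifted_weight, moments_summable_all].
Qed.

Lemma zsum_delta_shifted_pow t a p c0 c1 c2 c3 :
  (forall x, (x + a) ^ p = c0 + c1 * x + c2 * x ^ 2 + c3 * x ^ 3) ->
  zsum (fun j => delta j t * (IZR j + a) ^ p)
  = c0 * moment t 0 + c1 * moment t 1 + c2 * moment t 2 + c3 * moment t 3.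
Proof.
  intros Hpoly. rewrite !moment_zsum.
  set (m i := fun j => delta j t * IZR j ^ i).
  rewrite (zsum_ext _ (fun j => c0 * m 0%nat j
                                + (c1 * m 1%nat j + (c2 * m 2%nat j + c3 * m 3%nat j))))
    by (intros j; unfold m; rewrite Hpoly; cbn [pow]; ring).
  rewrite !zsum_plus, (zsum_scal c0), (zsum_scal c1), (zsum_scal c2), (zsum_scal c3) by
    (repeat first [apply moments_summable_all | apply zsummable_plus | apply zsummable_scal]).
  unfold m. ring.
Qed.

Lemma moment0_double_succ t :
  moment (2 * t + 1) 0 = / 2 * moment t 0 + / 2 * moment (t + 1) 0.
Proof.
  rewrite moment_double_succ, !(zsum_delta_shifted_pow _ _ _ 1 0 0 0) by (intros; ring). ring.
Qed.

Lemma moment1_double_succ t :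
  moment (2 * t + 1) 1
  = / 2 * (moment t 1 + moment t 0) + / 2 * (moment (t + 1) 1 - moment (t + 1) 0).
Proof.
  rewrite moment_double_succ, (zsum_delta_shifted_pow _ _ _ 1 1 0 0),
    (zsum_delta_shifted_pow _ _ _ (-1) 1 0 0)
    by (intros; ring).
  ring.
Qed.

Lemma moment_mass_mean t : moment t 0 = 1 /\ moment t 1 = 0.
Proof.
  assert (at0 : forall p, moment 0 p = 0 ^ p).
  { intros p. rewrite moment_zsum.
    destruct (zsum_single (fun j => delta j 0 * IZR j ^ p)) as [_ ->].
    - intros j Hj. rewrite delta_0, (proj2 (Z.eqb_neq j 0) Hj). ring.
    - rewrite delta_0, Z.eqb_refl. ring. }
  induction t as [| | t IH | t IH IH1] using binary_ind.
  - rewrite !at0. split; ring.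
  - pose proof (moment0_double_succ 0) as E0. pose proof (moment1_double_succ 0) as E1.
    pose proof (at0 0%nat) as A0. pose proof (at0 1%nat) as A1.
    cbn [Nat.mul Nat.add pow] in E0, E1, A0, A1. split; lra.
  - rewrite !moment_double. exact IH.
  - rewrite moment0_double_succ, moment1_double_succ.
    destruct IH as [-> ->], IH1 as [-> ->]. split; lra.
Qed.

Lemma moment2_double_succ t :
  moment (2 * t + 1) 2 = (moment t 2 + moment (t + 1) 2) / 2 + 1.
Proof.
  rewrite moment_double_succ, (zsum_delta_shifted_pow _ _ _ 1 2 1 0),
    (zsum_delta_shifted_pow _ _ _ 1 (-2) 1 0)
    by (intros; ring).
  destruct (moment_mass_mean t) as [-> ->], (moment_mass_mean (t + 1)) as [-> ->]. field.
Qed.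

Lemma moment3_double_succ t :
  moment (2 * t + 1) 3
  = (moment t 3 + moment (t + 1) 3) / 2 + 3 / 2 * (moment t 2 - moment (t + 1) 2).
Proof.
  rewrite moment_double_succ, (zsum_delta_shifted_pow _ _ _ 1 3 3 1),
    (zsum_delta_shifted_pow _ _ _ (-1) 3 (-3) 1)
    by (intros; ring).
  destruct (moment_mass_mean t) as [-> ->], (moment_mass_mean (t + 1)) as [-> ->]. field.
Qed.

Lemma cumulant2_centered (m : nat -> R) :
  m 0%nat = 1 -> m 1%nat = 0 -> cumulant m 2 = m 2%nat.
Proof.
  intros H0 H1. unfold cumulant. cbn [cumul_upto Nat.leb rsum Nat.sub].
  rewrite H0, H1. field.
Qed.

Lemma cumulant3_centered (m : nat -> R) :
  m 0%nat = 1 -> m 1%nat = 0 -> cumulant m 3 = m 3%nat.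
Proof.
  intros H0 H1. unfold cumulant. cbn [cumul_upto Nat.leb rsum Nat.sub].
  rewrite H0, H1. field.
Qed.

Lemma kappa2_moment t : kappa 2 t = moment t 2.
Proof. unfold kappa. apply cumulant2_centered; apply (moment_mass_mean t). Qed.

Lemma kappa3_moment t : kappa 3 t = moment t 3.
Proof. unfold kappa. apply cumulant3_centered; apply (moment_mass_mean t). Qed.

Lemma moment_pow2_mul k v p : moment (2 ^ k * v) p = moment v p.
Proof.
  induction k as [|k IH].
  - rewrite Nat.mul_1_l. reflexivity.
  - rewrite Nat.pow_succ_r', <- Nat.mul_assoc, moment_double. exact IH.
Qed.

Lemma index_succ k t :
  (2 ^ (S k + 1) * t + 2 ^ S k - 1 = 2 * (2 ^ (k + 1) * t + 2 ^ k - 1) + 1)%nat.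
Proof.
  rewrite !Nat.add_1_r, !Nat.pow_succ_r'.
  pose proof (Nat.pow_nonzero 2 k ltac:(lia)). nia.
Qed.

Lemma index_add1 k t : (2 ^ (k + 1) * t + 2 ^ k - 1 + 1 = 2 ^ k * (2 * t + 1))%nat.
Proof.
  rewrite (Nat.add_1_r k), Nat.pow_succ_r'.
  pose proof (Nat.pow_nonzero 2 k ltac:(lia)). nia.
Qed.

Lemma moments_at_index t k :
  let u := (2 ^ (k + 1) * t + 2 ^ k - 1)%nat in
  moment u 2
    = (2 ^ k + 1) * moment t 2 / 2 ^ (k + 1) + (2 ^ k - 1) * moment (t + 1) 2 / 2 ^ (k + 1)
      + 3 * (2 ^ k - 1) / 2 ^ k
  /\
  moment u 2 - moment u 3 / 3
    = (2 ^ k + 1) / 2 ^ (k + 1) * (moment t 2 - moment t 3 / 3)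
      + (2 ^ k - 1) / 2 ^ (k + 1) * (moment (t + 1) 2 - moment (t + 1) 3 / 3)
      + (1 / 2 + (INR k - 1) / 2 ^ (k + 1)) * (moment (t + 1) 2 - moment t 2)
      + 1 + (3 * INR k - 1) / 2 ^ k.
Proof.
  induction k as [|k IH]; intros u; unfold u.
  - replace (2 ^ (0 + 1) * t + 2 ^ 0 - 1)%nat with (2 * t)%nat by (cbn; lia).
    rewrite !moment_double. cbn [pow Nat.add INR]. split; field.
  - destruct IH as [IH2 IH3].
    rewrite index_succ, moment2_double_succ, moment3_double_succ, index_add1,
      !moment_pow2_mul, moment2_double_succ, moment3_double_succ.
    set (x := (2 ^ (k + 1) * t + 2 ^ k - 1)%nat) in *.
    assert (H3 : moment x 3 = 3 * (moment x 2 - (moment x 2 - moment x 3 / 3))) by field.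
    rewrite H3, IH3, IH2.
    rewrite S_INR, !pow_add. cbn [pow].
    assert (0 < 2 ^ k) by (apply pow_lt; lra).
    split; field; lra.
Qed.

Theorem lemma2p10 (t k : nat) :
  kappa 2 (2 ^ (k + 1) * t + 2 ^ k - 1)%nat
    = (2 ^ k + 1) * kappa 2 t / 2 ^ (k + 1)
      + (2 ^ k - 1) * kappa 2 (t + 1)%nat / 2 ^ (k + 1)
      + 3 * (2 ^ k - 1) / 2 ^ k
  /\
  Dfun (2 ^ (k + 1) * t + 2 ^ k - 1)%nat
    = (2 ^ k + 1) / 2 ^ (k + 1) * Dfun t
      + (2 ^ k - 1) / 2 ^ (k + 1) * Dfun (t + 1)%nat
      + (1 / 2 + (INR k - 1) / 2 ^ (k + 1)) * (kappa 2 (t + 1)%nat - kappa 2 t)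
      + 1 + (3 * INR k - 1) / 2 ^ k.
Proof.
  unfold Dfun. rewrite !kappa2_moment, !kappa3_moment. exact (moments_at_index t k).
Qed.
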